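(* In the publishing problem, assume the delay cost is global (a single non-negative function $C^{(d)}$), the gas price is constant, i.e. $R(P)=P$ with probability $1$ and $P_t=P$ for all $t$, and the publishing cost is constant, $C^{(p)}_t(N)=\beta\,\mathbb{1}[N\neq\emptyset]$. Then an optimal policy is to publish all pending transactions at constant intervals of length $n^*$ (i.e. consecutive publication steps are $n^*$ steps apart), where $$n^*\in\arg\min_{n\ge1}\frac{F^{(d)}(n)+\gamma^{n-1}\beta P}{1-\gamma^n}.$$
   Context: The publishing problem is the following infinite-horizon MDP in discrete time $t=0,1,2,\dots$. At each step $t$ a new transaction $H_t$ is created. The state at time $t$ is $(t,P_t,Q_t)$ with gas price $P_t\ge0$ and set $Q_t$ of unpublished transactions ($Q_0=\emptyset$). A policy $\pi$ chooses $N^\pi_t\subseteq Q_t$ to publish, incurring cost $C_t=P_t\,C^{(p)}_t(N^\pi_t)+C^{(d)}_t(Q_t\setminus N^\pi_t)$; then $Q_{t+1}=(Q_t\setminus N^\pi_t)\cup\{H_t\}$ and $P_{t+1}=R(P_t)$ for a random function $R$. Publishing cost: $C^{(p)}_t(N)=\alpha|N|+\beta\,\mathbb{1}[N\ne\emptyset]$, $\alpha,\beta\ge0$ (here $\alpha=0$). Delay cost: $C^{(d)}_t(N)=\sum_{H_\tau\in N}C^{(d)}_{H_\tau}(t-\tau)$ with non-negative functions $C^{(d)}_{H_\tau}$; it is global if all $C^{(d)}_{H_\tau}$ equal one function $C^{(d)}$. The expected total cost is $C(\pi)=\mathbb{E}[\sum_t\gamma^tC_t]$ with $0<\gamma<1$,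 and a policy is optimal if it minimizes $C(\pi)$. The aggregated delay cost is $F^{(d)}(n)=\sum_{t=1}^{n-1}\sum_{i=1}^{t}\gamma^{t-1}C^{(d)}(i)$. *)

From HB Require Import structures.
From mathcomp Require Import all_boot all_order all_algebra.
From mathcomp Require Import all_classical all_reals all_analysis.
Set Implicit Arguments. Unset Strict Implicit. Unset Printing Implicit Defensive.
Import Order.TTheory GRing.Theory Num.Theory.
Local Open Scope ring_scope.

(* Transactions are identified by their creation time: H_tau is tau.
   In the constant-price setting the dynamics are deterministic, so a
   (Markov, deterministic) policy maps the state (t, Q_t) to a set N_t;
   the published set is clamped to N_t ∩ Q_t so that N_t ⊆ Q_t always. *)
Definition policy := nat -> (nat -> bool) -> (nat -> bool).

Fixpoint queue (pi : policy) (t : nat) : nat -> bool :=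
  match t with
  | 0 => fun _ => false
  | t'.+1 => let Q := queue pi t' in
             fun tau => (Q tau && ~~ (pi t' Q tau && Q tau)) || (tau == t')
  end.

Definition published (pi : policy) (t : nat) : nat -> bool :=
  fun tau => pi t (queue pi t) tau && queue pi t tau.

(* stage cost C_t = P * beta * 1[N_t <> ∅] + sum_{H_tau in Q_t \ N_t} Cd (t - tau).
   Note Q_t ⊆ {0,...,t-1}. *)
Definition stage_cost {R : realType} (P beta : R) (Cd : nat -> R)
    (pi : policy) (t : nat) : R :=
  P * (beta * ([exists tau : 'I_t, published pi t tau] : bool)%:R)
  + \sum_(0 <= tau < t | queue pi t tau && ~~ published pi t tau) Cd (t - tau)%N.

Definition total_cost {R : realType} (gamma P beta : R) (Cd : nat -> R)
    (pi : policy) : \bar R :=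
  (\sum_(0 <= t <oo) ((gamma ^+ t * stage_cost P beta Cd pi t)%:E))%E.

Definition periodic_policy (n : nat) : policy :=
  fun t Q => if (n %| t)%N then Q else (fun _ => false).

Definition F_delay {R : realType} (gamma : R) (Cd : nat -> R) (n : nat) : R :=
  \sum_(1 <= t < n) \sum_(1 <= i < t.+1) gamma ^+ t.-1 * Cd i.

Definition objective {R : realType} (gamma P beta : R) (Cd : nat -> R) (n : nat) : R :=
  (F_delay gamma Cd n + gamma ^+ n.-1 * beta * P) / (1 - gamma ^+ n).

(** Let [c := objective nstar].  A cycle of [a] steps between two publications
    costs, discounted from its start, [F_delay a + gamma^(a-1) beta P];
    optimality of [nstar] says exactly that this is at least [c (1 - gamma^a)]
    for every [a >= 1] ([cycle_slack c a >= 0]), with equality for [a = nstar].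
    Telescoping over the publication steps, the discounted cost of the first
    [N] steps of any policy is at least [prefix_bound c p N], [p] being the
    last publication step before [N]; for the [nstar]-periodic policy it is at
    most that bound, which is then at most [gamma c].  Letting [N] grow,
    [gamma c] separates the two total costs. *)
From HB Require Import structures.
From mathcomp Require Import all_boot all_order all_algebra.
From mathcomp Require Import all_classical all_reals all_analysis.
From mathcomp Require Import ring zify.
Import Order.TTheory GRing.Theory Num.Theory.
Local Open Scope ring_scope.

Lemma ler_sum_nat_cond {R : numDomainType} m n (P Q : pred nat) (F : nat -> R) :
  (forall i, 0 <= F i) -> (forall i, (m <= i < n)%N -> P i -> Q i) ->
  \sum_(m <= i < n | P i) F i <= \sum_(m <= i < n | Q i) F i.
Proof.
move=> F_ge0 PQ; rewrite big_mkcond [X in _ <= X]big_mkcond; apply: ler_sum_nat => i /PQ.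
by case: (P i) => [->//|_]; case: (Q i).
Qed.

Section SeriesBounds.
Import numFieldNormedType.Exports.
Local Open Scope classical_set_scope.
Context {R : realType}.

Lemma nneseries_le_near (f : nat -> R) (M : R) :
  (forall t, 0 <= f t) -> (\forall N \near \oo, \sum_(0 <= t < N) f t <= M) ->
  (\sum_(0 <= t <oo) (f t)%:E <= M%:E)%E.
Proof.
move=> f_ge0 fM; apply: lime_le.
  by apply: is_cvg_nneseries => t _ _; rewrite lee_fin.
by apply: filterS fM => N; rewrite /= sumEFin lee_fin.
Qed.

Lemma nneseries_ge_near (f u : nat -> R) (r : R) :
  (forall t, 0 <= f t) -> u @ \oo --> r ->
  (\forall N \near \oo, u N <= \sum_(0 <= t < N) f t) ->
  (r%:E <= \sum_(0 <= t <oo) (f t)%:E)%E.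
Proof.
move=> f_ge0 ur uf.
have uEr : (u N)%:E @[N --> \oo] --> r%:E by apply: cvg_EFin => //; exact: nearW.
rewrite -(cvg_lim _ uEr) //; apply: lee_lim.
- by apply/cvg_ex; exists r%:E.
- by apply: is_cvg_nneseries => t _ _; rewrite lee_fin.
- by apply: filterS uf => N; rewrite /= sumEFin lee_fin.
Qed.

Lemma cvg_sub_geometric (r g K : R) : `|g| < 1 -> r - g ^+ N * K @[N --> \oo] --> r.
Proof.
move=> g1; rewrite -[X in _ --> X]subr0 -(mul0r K).
by apply: cvgB; [exact: cvg_cst | apply: cvgMr_tmp; exact: cvg_expr].
Qed.

End SeriesBounds.

Section DelayCost.
Context {R : realType} (gamma : R) (Cd : nat -> R).

Definition delay_sum (a : nat) : R := \sum_(1 <= i < a.+1) Cd i.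

Lemma F_delay1 : F_delay gamma Cd 1 = 0.
Proof. by rewrite /F_delay big_geq. Qed.

Lemma F_delayS a :
  F_delay gamma Cd a.+1 = F_delay gamma Cd a + gamma ^+ a.-1 * delay_sum a.
Proof.
case: a => [|a]; first by rewrite /F_delay /delay_sum !big_geq // mulr0 addr0.
by rewrite /F_delay big_nat_recr //= mulr_sumr.
Qed.

Lemma sum_delay_window p t : (p <= t)%N ->
  \sum_(0 <= tau < t | (p <= tau)%N) Cd (t - tau) = delay_sum (t - p).
Proof.
move=> pt; rewrite (@big_cat_nat _ _ _ p 0 t) // /= big_nat_cond big1 ?add0r;
  last by move=> i /andP[/andP[_ ip] pi]; rewrite leqNgt ip in pi.
rewrite big_nat_cond (eq_bigl (fun i => (p <= i < t)%N)); last first.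
  by move=> i; rewrite andbC andbA andbb.
rewrite -big_nat big_nat_rev -{1}(add0n p) big_addn /delay_sum big_add1 /=.
by apply: eq_big_nat => i ipt; congr Cd; lia.
Qed.

Hypotheses (gamma_ge0 : 0 <= gamma) (Cd_ge0 : forall i, 0 <= Cd i).

Lemma delay_sum_ge0 a : 0 <= delay_sum a.
Proof. exact: sumr_ge0. Qed.

Lemma F_delay_ge0 a : 0 <= F_delay gamma Cd a.
Proof. by apply: sumr_ge0 => t _; apply: sumr_ge0 => i _; rewrite mulr_ge0 ?exprn_ge0. Qed.

Lemma F_delay_le : {homo F_delay gamma Cd : a b / (a <= b)%N >-> a <= b}.
Proof.
apply/nondecreasing_seqP => a; rewrite F_delayS lerDl.
by rewrite mulr_ge0 ?exprn_ge0 ?delay_sum_ge0.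
Qed.

End DelayCost.

Definition publishes (pi : policy) (t : nat) : bool :=
  [exists tau : 'I_t, published pi t tau].

Lemma queueS pi t tau :
  queue pi t.+1 tau = (queue pi t tau && ~~ published pi t tau) || (tau == t).
Proof. by []. Qed.

Lemma queue_new pi t : queue pi t.+1 t.
Proof. by rewrite queueS eqxx orbT. Qed.

Lemma published_idle [pi t tau] :
  ~~ publishes pi t -> (tau < t)%N -> published pi t tau = false.
Proof. by move=> /existsPn idle tau_t; apply/negbTE/(idle (Ordinal tau_t)). Qed.

Lemma published_periodic n t tau :
  published (periodic_policy n) t tau = (n %| t)%N && queue (periodic_policy n) t tau.
Proof. by rewrite /published /periodic_policy; case: (n %| t)%N; rewrite ?andbb. Qed.

Section Costs.
Context {R : realType} (gamma P beta : R) (Cd : nat -> R).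

Definition partial_cost (pi : policy) (N : nat) : R :=
  \sum_(0 <= t < N) gamma ^+ t * stage_cost P beta Cd pi t.

Definition prefix_bound (c : R) (p N : nat) : R :=
  gamma * c * (1 - gamma ^+ p) + gamma ^+ p.+1 * F_delay gamma Cd (N - p).

Definition cycle_slack (c : R) (a : nat) : R :=
  F_delay gamma Cd a + gamma ^+ a.-1 * beta * P - c * (1 - gamma ^+ a).

Lemma partial_costS pi N :
  partial_cost pi N.+1 = partial_cost pi N + gamma ^+ N * stage_cost P beta Cd pi N.
Proof. by rewrite /partial_cost big_nat_recr. Qed.

Lemma expr_split_cycle [p N : nat] : (p < N)%N ->
  gamma ^+ N = gamma ^+ p * gamma * gamma ^+ (N - p).-1 /\
  gamma ^+ (N - p) = gamma * gamma ^+ (N - p).-1.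
Proof.
move=> pN; rewrite -exprSr -exprD -exprS prednK ?subn_gt0 //.
by split=> //; congr (_ ^+ _); lia.
Qed.

Lemma prefix_bound_wait c p M : (p < M)%N ->
  prefix_bound c p M.+1 = prefix_bound c p M + gamma ^+ M * delay_sum Cd (M - p).
Proof.
move=> pM; rewrite /prefix_bound (subSn (ltnW pM)) F_delayS exprSr.
have [-> _] := expr_split_cycle pM.
by move: (gamma ^+ p) (gamma ^+ (M - p).-1) => x y; ring.
Qed.

Lemma prefix_bound_publish c p M : (p < M)%N ->
  prefix_bound c p M + gamma ^+ M * (P * beta)
  = prefix_bound c M M.+1 + gamma ^+ p.+1 * cycle_slack c (M - p).
Proof.
move=> pM; rewrite /prefix_bound /cycle_slack subSnn F_delay1 mulr0 addr0 exprSr.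
have [-> ->] := expr_split_cycle pM.
by move: (gamma ^+ p) (gamma ^+ (M - p).-1) => x y; ring.
Qed.

Hypotheses (gamma_ge0 : 0 <= gamma) (P_ge0 : 0 <= P) (beta_ge0 : 0 <= beta).
Hypothesis Cd_ge0 : forall i, 0 <= Cd i.

Lemma prefix_bound_ge c p N : (p < N)%N ->
  0 <= cycle_slack c (N - p) ->
  gamma * c - gamma ^+ N * (gamma * c + beta * P) <= prefix_bound c p N.
Proof.
move=> pN slack_ge0; rewrite -subr_ge0.
have -> : prefix_bound c p N - (gamma * c - gamma ^+ N * (gamma * c + beta * P))
          = gamma ^+ p.+1 * cycle_slack c (N - p).
  rewrite /prefix_bound /cycle_slack exprSr.
  have [-> ->] := expr_split_cycle pN.
  by move: (gamma ^+ p) (gamma ^+ (N - p).-1) => x y; ring.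
by rewrite mulr_ge0 ?exprn_ge0.
Qed.

Lemma prefix_bound_le c p N :
  F_delay gamma Cd (N - p) <= c -> prefix_bound c p N <= gamma * c.
Proof.
move=> Fc; rewrite -subr_ge0.
have -> : gamma * c - prefix_bound c p N
          = gamma ^+ p.+1 * (c - F_delay gamma Cd (N - p)).
  by rewrite /prefix_bound exprSr; ring.
by rewrite mulr_ge0 ?exprn_ge0 ?subr_ge0.
Qed.

Lemma stage_cost_ge0 pi t : 0 <= stage_cost P beta Cd pi t.
Proof. by rewrite addr_ge0 ?sumr_ge0 // !mulr_ge0. Qed.

Lemma stage_cost_publish_ge pi t : publishes pi t -> P * beta <= stage_cost P beta Cd pi t.
Proof.
rewrite /stage_cost /publishes => ->; rewrite mulr1 lerDl.
exact: sumr_ge0.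
Qed.

Lemma stage_cost_publish_all_le pi t :
  (forall tau, queue pi t tau -> published pi t tau) ->
  stage_cost P beta Cd pi t <= P * beta.
Proof.
move=> clear; rewrite /stage_cost big1 => [|tau /andP[/clear -> //]].
by rewrite addr0; case: [exists _, _]; rewrite ?mulr1 // !mulr0 mulr_ge0.
Qed.

Lemma stage_cost_idle pi t : ~~ publishes pi t ->
  stage_cost P beta Cd pi t = \sum_(0 <= tau < t | queue pi t tau) Cd (t - tau).
Proof.
move=> idle; move: (idle); rewrite /stage_cost /publishes => /negbTE ->.
rewrite !mulr0 add0r big_nat_cond [RHS]big_nat_cond; apply: eq_bigl => tau.
by case: (ltnP tau t) => [/(published_idle idle) -> | ]; rewrite ?andbT ?andbF.
Qed.

Lemma stage_cost_idle_ge [pi t p] : (p <= t)%N -> ~~ publishes pi t ->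
  (forall tau, (p <= tau < t)%N -> queue pi t tau) ->
  delay_sum Cd (t - p) <= stage_cost P beta Cd pi t.
Proof.
move=> pt idle pending; rewrite stage_cost_idle // -sum_delay_window //.
by apply: ler_sum_nat_cond => // tau /andP[_ tau_t] p_tau; rewrite pending ?p_tau.
Qed.

Lemma stage_cost_idle_le [pi t p] : (p <= t)%N -> ~~ publishes pi t ->
  (forall tau, queue pi t tau -> (p <= tau)%N) ->
  stage_cost P beta Cd pi t <= delay_sum Cd (t - p).
Proof.
move=> pt idle since_p; rewrite stage_cost_idle // -sum_delay_window //.
by apply: ler_sum_nat_cond => // tau _ /since_p.
Qed.

Lemma partial_cost_ge_prefix_bound pi c : (forall a, (0 < a)%N -> 0 <= cycle_slack c a) ->
  forall N, exists p, [/\ (p <= N)%N,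
    forall tau, (p <= tau <= N)%N -> queue pi N.+1 tau &
    prefix_bound c p N.+1 <= partial_cost pi N.+1].
Proof.
move=> slack_ge0; elim=> [|N [p [pN pending lower]]].
  exists 0%N; split=> // [tau|].
    by rewrite leqn0 => /eqP ->; exact: queue_new.
  rewrite /prefix_bound subn0 F_delay1 expr0 subrr !mulr0 addr0.
  by rewrite sumr_ge0 // => t _; rewrite mulr_ge0 ?exprn_ge0 ?stage_cost_ge0.
rewrite partial_costS; have pN1 : (p < N.+1)%N by [].
case: (boolP (publishes pi N.+1)) => [pub | idle].
- exists N.+1; split=> // [tau|].
    by rewrite -eqn_leq => /eqP ->; exact: queue_new.
  apply: (@le_trans _ _ (prefix_bound c p N.+1 + gamma ^+ N.+1 * (P * beta))).
    by rewrite prefix_bound_publish // lerDl mulr_ge0 ?exprn_ge0 ?slack_ge0 ?subn_gt0.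
  by rewrite lerD // ler_wpM2l ?exprn_ge0 ?stage_cost_publish_ge.
- exists p; split=> [||]; first exact: leqW.
    move=> tau /andP[p_tau]; rewrite leq_eqVlt => /orP[/eqP -> | tau_N]; first exact: queue_new.
    by rewrite queueS (published_idle idle tau_N) pending ?p_tau.
  have pending_idle tau : (p <= tau < N.+1)%N -> queue pi N.+1 tau.
    by move=> /andP[p_tau tau_N]; apply/pending/andP.
  rewrite prefix_bound_wait //; apply: lerD lower _.
  by rewrite ler_wpM2l ?exprn_ge0 // (stage_cost_idle_ge (ltnW pN1) idle pending_idle).
Qed.

Lemma partial_cost_periodic_le_prefix_bound n c : (0 < n)%N -> cycle_slack c n = 0 ->
  forall N, exists p, [/\ (p <= N)%N, (n %| p)%N, (N.+1 - p <= n)%N,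
    forall tau, queue (periodic_policy n) N.+1 tau -> (p <= tau)%N &
    partial_cost (periodic_policy n) N.+1 <= prefix_bound c p N.+1].
Proof.
move=> n_gt0 slack0; elim=> [|N [p [pN n_p window since_p upper]]].
  exists 0%N; split=> //.
  rewrite /partial_cost big_nat1 /prefix_bound subn0 F_delay1 expr0 subrr.
  rewrite !mulr0 addr0 mul1r stage_cost_idle ?big_geq //.
  by apply/existsP => -[[]].
rewrite partial_costS; have pN1 : (p < N.+1)%N by [].
case: (boolP (n %| N.+1)%N) => [n_N | n_N].
- have cycle_n : (N.+1 - p)%N = n.
    apply/eqP; rewrite eqn_leq window dvdn_leq ?subn_gt0 //.
    by rewrite dvdn_sub.
  exists N.+1; split=> // [|tau|]; first by rewrite subSnn.
    by rewrite queueS published_periodic n_N andbN => /eqP ->.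
  have := @prefix_bound_publish c p N.+1 pN1; rewrite cycle_n slack0 mulr0 addr0 => <-.
  rewrite lerD // ler_wpM2l ?exprn_ge0 // stage_cost_publish_all_le // => tau.
  by rewrite published_periodic n_N.
- have idle : ~~ publishes (periodic_policy n) N.+1.
    by apply/existsPn => tau; rewrite published_periodic (negbTE n_N).
  exists p; split=> //; first exact: leqW.
  + suff : (N.+1 - p)%N != n by lia.
    apply: contraNneq n_N => cycle_n.
    have -> : N.+1 = (p + n)%N by lia.
    by rewrite dvdn_add.
  + move=> tau; rewrite queueS published_periodic (negbTE n_N) /= andbT.
    by case/orP=> [/since_p // | /eqP ->]; exact: leqW.
  + rewrite prefix_bound_wait // lerD // ler_wpM2l ?exprn_ge0 //.
    exact: stage_cost_idle_le (ltnW pN1) idle since_p.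
Qed.

Lemma total_cost_periodic_le n c : (0 < n)%N ->
  cycle_slack c n = 0 -> F_delay gamma Cd n <= c ->
  (total_cost gamma P beta Cd (periodic_policy n) <= (gamma * c)%:E)%E.
Proof.
move=> n_gt0 slack0 Fn_le; apply: nneseries_le_near => [t|].
  by rewrite mulr_ge0 ?exprn_ge0 ?stage_cost_ge0.
exists 1%N => // -[//|N] _.
have [p [_ _ window _ upper]] := partial_cost_periodic_le_prefix_bound n c n_gt0 slack0 N.
apply: le_trans upper _; apply: prefix_bound_le; apply: le_trans Fn_le.
exact: F_delay_le.
Qed.

Lemma total_cost_ge pi c : gamma < 1 ->
  (forall a, (0 < a)%N -> 0 <= cycle_slack c a) ->
  ((gamma * c)%:E <= total_cost gamma P beta Cd pi)%E.
Proof.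
move=> gamma_lt1 slack_ge0.
apply: (nneseries_ge_near _ (fun N => gamma * c - gamma ^+ N * (gamma * c + beta * P))).
- by move=> t; rewrite mulr_ge0 ?exprn_ge0 ?stage_cost_ge0.
- by apply: cvg_sub_geometric; rewrite ger0_norm.
exists 1%N => // -[//|N] _.
have [p [pN _ lower]] := partial_cost_ge_prefix_bound pi c slack_ge0 N.
by apply: le_trans lower; apply: prefix_bound_ge; rewrite ?slack_ge0 ?subn_gt0.
Qed.

End Costs.

Theorem theorem1 (R : realType) (gamma P beta : R) (Cd : nat -> R) (nstar : nat) :
  0 < gamma -> gamma < 1 -> 0 <= P -> 0 <= beta ->
  (forall i, 0 <= Cd i) ->
  (1 <= nstar)%N ->
  (forall n, (1 <= n)%N -> objective gamma P beta Cd nstar <= objective gamma P beta Cd n) ->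
  forall pi : policy,
    (total_cost gamma P beta Cd (periodic_policy nstar)
       <= total_cost gamma P beta Cd pi)%E.
Proof.
move=> gamma_gt0 gamma_lt1 P_ge0 beta_ge0 Cd_ge0 nstar_gt0 nstar_opt pi.
have gamma_ge0 := ltW gamma_gt0.
set c := objective gamma P beta Cd nstar.
have cycle_gt0 a : (0 < a)%N -> 0 < 1 - gamma ^+ a.
  by move=> a_gt0; rewrite subr_gt0 exprn_ilt1 // -lt0n.
have slack_ge0 a : (0 < a)%N -> 0 <= cycle_slack gamma P beta Cd c a.
  by move=> a_gt0; rewrite subr_ge0 -ler_pdivlMr ?cycle_gt0 //; exact: nstar_opt.
have slack0 : cycle_slack gamma P beta Cd c nstar = 0.
  by rewrite /cycle_slack /c /objective divfK ?subrr // gt_eqF ?cycle_gt0.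
have c_ge0 : 0 <= c.
  apply: divr_ge0; last exact/ltW/cycle_gt0.
  by rewrite addr_ge0 ?F_delay_ge0 // !mulr_ge0 ?exprn_ge0.
have Fn_le : F_delay gamma Cd nstar <= c.
  have : F_delay gamma Cd nstar <= c * (1 - gamma ^+ nstar).
    have /eqP := slack0; rewrite subr_eq0 => /eqP <-.
    by rewrite lerDl !mulr_ge0 ?exprn_ge0.
  by move/le_trans; apply; rewrite ler_piMr // lerBlDr lerDl exprn_ge0.
apply: le_trans
  (total_cost_periodic_le _ _ _ _ gamma_ge0 P_ge0 beta_ge0 Cd_ge0 _ _ nstar_gt0 slack0 Fn_le)
  (total_cost_ge _ _ _ _ gamma_ge0 P_ge0 beta_ge0 Cd_ge0 pi c gamma_lt1 slack_ge0).
Qed.
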